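(* Let $n\geq 1$. For every finite frame $\mathcal{F}$ in which all theorems of $\mathrm{K4}\mathbb{C}_n$ are valid, there exist a hereditarily $(n+1)$-irresolvable T$_D$ space $X$ and a surjective $d$-morphism from $X$ onto $\mathcal{F}$.
   Context: Modal formulas use propositional variables, Boolean connectives and $\Diamond,\Box$. A normal logic is a set of formulas containing all tautologies and all instances of $\Box(\varphi\to\psi)\to(\Box\varphi\to\Box\psi)$, closed under modus ponens and $\Box$-generalisation. For $n\ge1$ and formulas $\varphi_0,\dots,\varphi_n$, let $\mathbb{P}_n(\varphi_0,\dots,\varphi_n)=\Diamond(\varphi_1\land\Diamond(\varphi_2\land\cdots\land\Diamond(\varphi_n\land\Diamond\varphi_0))\cdots)$, let $\mathbb{D}_n(\varphi_0,\dots,\varphi_n)=\bigwedge_{i<j\le n}\neg(\varphi_i\land\varphi_j)$, and $\Box^*\psi=\psi\land\Box\psi$. $\mathbb{C}_n$ is the scheme $\Box^*\mathbb{D}_n(\varphi_0,\dots,\varphi_n)\to(\Diamond\varphi_0\to\Diamond(\varphi_0\land\neg\mathbb{P}_n(\varphi_0,\dots,\varphi_n)))$. $\mathrm{K4}\mathbb{C}_n$ is the smallest normal logic containing all instances of $\Diamond\Diamond\varphi\to\Diamond\varphi$ and of $\mathbb{C}_n$. Validity in a Kripke frame $(W,R)$ is the standard relational one ($\Diamond\varphi$ true at $x$ iff $\varphi$ true at some $R$-successor of $x$). For a space $X$ and $Y\subseteq X$, $\mathrm{d}_XY$ is the set of limit points of $Y$ ($x$ such that every $O-\{x\}$, $O$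 an open neighbourhood of $x$, meets $Y$). $S$ is crowded in $X$ if $S\subseteq\mathrm{d}_XS$. $X$ is T$_D$ if $\mathrm{d}_X\{x\}$ is closed for all $x$. $X$ is $k$-resolvable if it has $k$ pairwise disjoint non-empty dense subsets, and hereditarily $k$-irresolvable if no non-empty subspace is $k$-resolvable. For a transitive frame $\mathcal{F}=(W,R)$, $W_R$ denotes $W$ with the topology whose open sets are the $R$-up-sets. A $d$-morphism from $X$ to $\mathcal{F}$ is $f:X\to W$ such that (i) $f$ is continuous and open as a map $X\to W_R$; (ii) if $w$ is $R$-reflexive then $f^{-1}\{w\}$ is crowded in $X$; (iii) if $w$ is $R$-irreflexive then $f^{-1}\{w\}\cap\mathrm{d}_Xf^{-1}\{w\}=\emptyset$. *)

From HB Require Import structures.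
From mathcomp Require Import all_boot all_order.
From mathcomp Require Import all_classical topology.
Set Implicit Arguments. Unset Strict Implicit. Unset Printing Implicit Defensive.
Local Open Scope classical_set_scope.

Inductive form : Type :=
| Var : nat -> form
| Bot : form
| Imp : form -> form -> form
| Box : form -> form.

Definition Neg (a : form) : form := Imp a Bot.
Definition Top : form := Neg Bot.
Definition Or (a b : form) : form := Imp (Neg a) b.
Definition And (a b : form) : form := Neg (Imp a (Neg b)).
Definition Dia (a : form) : form := Neg (Box (Neg a)).

Fixpoint beval (v : form -> bool) (a : form) : bool :=
  match a with
  | Var _ => v a
  | Bot => false
  | Imp b c => (~~ beval v b) || beval v c
  | Box _ => v a
  end.

(* a (substitution instance of a) propositional tautology *)
Definition tautology (a : form) : Prop := forall v, beval v a.

Inductive normal_thm (Ax : form -> Prop) : form -> Prop :=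
| nt_taut a : tautology a -> normal_thm Ax a
| nt_K a b : normal_thm Ax (Imp (Box (Imp a b)) (Imp (Box a) (Box b)))
| nt_ax a : Ax a -> normal_thm Ax a
| nt_mp a b : normal_thm Ax (Imp a b) -> normal_thm Ax a -> normal_thm Ax b
| nt_nec a : normal_thm Ax a -> normal_thm Ax (Box a).

(* P_n(phi_0,...,phi_n) = <>(phi_1 /\ <>(phi_2 /\ ... /\ <>(phi_n /\ <>phi_0))) *)
Fixpoint Pchain (phi : nat -> form) (i m : nat) : form :=
  match m with
  | 0 => Dia (phi 0)
  | m'.+1 => Dia (And (phi i) (Pchain phi i.+1 m'))
  end.
Definition Pn (n : nat) (phi : nat -> form) : form := Pchain phi 1 n.

(* D_n(phi_0,...,phi_n) = /\_{i<j<=n} ~(phi_i /\ phi_j) *)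
Definition Dn (n : nat) (phi : nat -> form) : form :=
  foldr And Top
    (flatten [seq [seq Neg (And (phi i) (phi j)) | i <- iota 0 j] | j <- iota 0 n.+1]).

Definition BoxStar (a : form) : form := And a (Box a).

Definition Cn (n : nat) (phi : nat -> form) : form :=
  Imp (BoxStar (Dn n phi))
      (Imp (Dia (phi 0)) (Dia (And (phi 0) (Neg (Pn n phi))))).

Definition K4Cn_axiom (n : nat) (a : form) : Prop :=
  (exists b, a = Imp (Dia (Dia b)) (Dia b)) \/ (exists phi, a = Cn n phi).

Definition K4Cn (n : nat) : form -> Prop := normal_thm (K4Cn_axiom n).

Fixpoint ksat (W : Type) (R : W -> W -> Prop) (V : nat -> W -> Prop)
    (w : W) (a : form) : Prop :=
  match a with
  | Var p => V p w
  | Bot => False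
  | Imp b c => ksat R V w b -> ksat R V w c
  | Box b => forall u, R w u -> ksat R V u b
  end.

Definition frame_valid (W : Type) (R : W -> W -> Prop) (a : form) : Prop :=
  forall V w, ksat R V w a.

Definition dset (X : topologicalType) (Y : set X) : set X := limit_point Y.

Definition crowded_in (X : topologicalType) (S : set X) : Prop := S `<=` dset S.

Definition TD_space (X : topologicalType) : Prop :=
  forall x : X, closed (dset [set x]).

(* D is dense in the subspace Y (subspace topology: open sets are U `&` Y) *)
Definition dense_in_subspace (X : topologicalType) (Y D : set X) : Prop :=
  forall U : set X, open U -> U `&` Y !=set0 -> U `&` D !=set0.

Definition subspace_resolvable (X : topologicalType) (k : nat) (Y : set X) : Prop :=
  exists D : 'I_k -> set X,
    [/\ forall i, D i `<=` Y,
        forall i, D i !=set0,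
        forall i, dense_in_subspace Y (D i)
      & forall i j, i != j -> D i `&` D j = set0].

Definition hereditarily_irresolvable (X : topologicalType) (k : nat) : Prop :=
  forall Y : set X, Y !=set0 -> ~ subspace_resolvable k Y.

Definition upset (W : Type) (R : W -> W -> Prop) (U : set W) : Prop :=
  forall w u, U w -> R w u -> U u.

Definition d_morphism (X : topologicalType) (W : Type) (R : W -> W -> Prop)
    (f : X -> W) : Prop :=
  [/\ (* continuous into W_R *) forall U, upset R U -> open (f @^-1` U),
      (* open into W_R *) forall O : set X, open O -> upset R (f @` O),
      forall w, R w w -> crowded_in (f @^-1` [set w])
    & forall w, ~ R w w -> f @^-1` [set w] `&` dset (f @^-1` [set w]) = set0].

From HB Require Import structures.
From mathcomp Require Import all_boot all_order.
From mathcomp Require Import all_classical topology.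
Set Implicit Arguments. Unset Strict Implicit. Unset Printing Implicit Defensive.
Local Open Scope classical_set_scope.

(* Fix a free ultrafilter U on nat and topologise W x nat by calling O open when,
   for every (w, k) in O and every R-successor u of w, the slice
   {m | (u, m) in O} belongs to U; the first projection is the d-morphism.
   Freeness makes the space T1 and the fibres over reflexive points crowded,
   and transitivity (axiom 4) isolates the points of a fibre over an
   irreflexive point.  If Y had n+1 disjoint dense subsets D_i, pick a point
   of Y whose first coordinate w is R-maximal: density forces every D_i to
   have a U-large slice over some u_i in the cluster of w.  Axiom C_n bounds
   clusters by n points, so u_i = u_j for some i <> j, and the two U-large
   slices meet. *)

Section KripkeFrames.
Variables (W : Type) (R : W -> W -> Prop).

Lemma ksat_Dia V w a : ksat R V w (Dia a) <-> exists2 u, R w u & ksat R V u a.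
Proof.
split=> [|[u Rwu ua] nDia]; last exact: nDia u Rwu ua.
by apply: contra_notP => nex u Rwu ua; apply: nex; exists u.
Qed.

Lemma ksat_And V w a b : ksat R V w (And a b) <-> ksat R V w a /\ ksat R V w b.
Proof.
split=> /= [nImp|[wa wb] nab]; last exact: nab wa wb.
by split; apply: contrapT => nw; apply: nImp => wa wb; apply: nw.
Qed.

Lemma ksat_foldr_And V w l :
  all (fun a => `[< ksat R V w a >]) l -> ksat R V w (foldr And Top l).
Proof.
elim: l => [_ /= //|a l IHl /andP[/asboolP wa /IHl wl]].
exact/ksat_And.
Qed.

Lemma ksat_Dn V w n phi :
  (forall i j, (i < j <= n)%N -> ksat R V w (phi i) -> ~ ksat R V w (phi j)) ->
  ksat R V w (Dn n phi).
Proof.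
move=> disj; apply: ksat_foldr_And; apply/all_allpairsP => j i.
rewrite !mem_iota !add0n ltnS => /andP[_ le_jn] /andP[_ lt_ij].
by apply/asboolP => /ksat_And[wi wj]; apply: disj wi wj; rewrite lt_ij le_jn.
Qed.

Lemma frame_valid_4_trans :
  frame_valid R (Imp (Dia (Dia (Var 0))) (Dia (Var 0))) ->
  forall a b c, R a b -> R b c -> R a c.
Proof.
move=> valid4 a b c Rab Rbc.
pose V (_ : nat) x := x = c.
have wit4 : ksat R V a (Dia (Dia (Var 0))) -> ksat R V a (Dia (Var 0)) := valid4 V a.
have /wit4/ksat_Dia[u Rau <-] // : ksat R V a (Dia (Dia (Var 0))).
by apply/ksat_Dia; exists b => //; apply/ksat_Dia; exists c.
Qed.

Section Clique.
Variables (n : nat) (g : 'I_n.+1 -> W).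
Hypothesis validCn : frame_valid R (Cn n Var).
Hypothesis clique : forall i j, R (g i) (g j).

Let V (p : nat) (x : W) := exists2 i : 'I_n.+1, i = p :> nat & x = g i.

Let ksat_Pchain y i m : (i + m <= n.+1)%N -> (forall j, R y (g j)) ->
  ksat R V y (Pchain Var i m).
Proof.
elim: m i y => [|m IHm] i y le_imn Ryg; apply/ksat_Dia.
  by exists (g ord0) => //; exists ord0.
have lt_in : (i < n.+1)%N by rewrite (leq_trans _ le_imn) // addnS ltnS leq_addr.
exists (g (Ordinal lt_in)) => //; apply/ksat_And; split.
  by exists (Ordinal lt_in).
by apply: IHm => //; rewrite addSnnS.
Qed.

Lemma frame_valid_Cn_clique_not_inj : ~ injective g.
Proof.
move=> g_inj.
have Dn_V y : ksat R V y (Dn n Var).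
  apply: ksat_Dn => i j /andP[lt_ij _] [i' Ei ->] [j' Ej /g_inj eq_ij].
  by move: lt_ij; rewrite -Ei -Ej eq_ij ltnn.
have CnV : ksat R V (g ord0) (BoxStar (Dn n Var)) ->
    ksat R V (g ord0) (Dia (Var 0)) ->
    ksat R V (g ord0) (Dia (And (Var 0) (Neg (Pn n Var)))) := @validCn V (g ord0).
have Box_Dn : ksat R V (g ord0) (BoxStar (Dn n Var)).
  by apply/ksat_And; split => // u _; exact: Dn_V.
have Dia0 : ksat R V (g ord0) (Dia (Var 0)).
  by apply/ksat_Dia; exists (g ord0) => //; exists ord0.
(* C_n yields a successor of g 0 refuting P_n, yet the clique satisfies P_n. *)
have /ksat_Dia[_ _ /ksat_And[[k _ ->]]] := CnV Box_Dn Dia0.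
by apply; apply: ksat_Pchain; rewrite ?add1n.
Qed.

End Clique.
End KripkeFrames.

Lemma exists_maximal (W : finType) (R : rel W) :
  (forall a b c, R a b -> R b c -> R a c) ->
  forall P : set W, P !=set0 -> exists2 w, P w & forall v, P v -> R w v -> R v w.
Proof.
move=> R_trans P [w0 Pw0].
pose up w := [set u | (u == w) || R w u]%SET.
have [w /asboolP Pw min_w] :=
  arg_minnP (fun w => #|up w|) (asboolT Pw0 : (fun w => `[< P w >]) w0).
exists w => // v Pv Rwv; apply: contrapT => nRvw.
suff /proper_card : (up v \proper up w)%SET by rewrite ltnNge min_w //; exact/asboolP.
apply/fintype.properP; split.
  apply/fintype.subsetP => u; rewrite !inE => /orP[/eqP->|Rvu].
    by rewrite Rwv orbT.
  by rewrite (R_trans _ _ _ Rwv Rvu) orbT.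
exists w; first by rewrite !inE eqxx.
rewrite !inE negb_or; apply/andP; split; last exact/negP.
by apply/eqP => wv; subst v.
Qed.

Section FrameSpaceOpen.
Variables (W : Type) (R : W -> W -> Prop) (F : set_system nat).
Hypothesis F_filter : Filter F.

Definition slice (A : set (W * nat)) (u : W) : set nat := [set m | A (u, m)].

Definition frame_space_open (O : set (W * nat)) : Prop :=
  forall x, O x -> forall u, R x.1 u -> F (slice O u).

Lemma frame_space_openT : frame_space_open setT.
Proof. by move=> x _ u _; exact: filterT. Qed.

Lemma frame_space_openI : setI_closed frame_space_open.
Proof.
by move=> A B oA oB x [Ax Bx] u Rxu; apply: filterI (oA x Ax u Rxu) (oB x Bx u Rxu).
Qed.

Lemma frame_space_open_bigcup (I : Type) (O : I -> set (W * nat)) :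
  (forall i, frame_space_open (O i)) -> frame_space_open (\bigcup_i O i).
Proof.
move=> oO x [i _ Oix] u Rxu; apply: filterS (oO i x Oix u Rxu) => m Oium.
by exists i.
Qed.

End FrameSpaceOpen.

Definition frame_space (W : choiceType) (R : W -> W -> Prop) (F : filter_on nat) :
  Type := (W * nat)%type.
HB.instance Definition _ W R F := Choice.on (@frame_space W R F).
HB.instance Definition _ W R F := isOpenTopological.Build (@frame_space W R F)
  (@frame_space_openT W R F _) (@frame_space_openI W R F _)
  (@frame_space_open_bigcup W R F _).

Section FrameSpace.
Variables (W : choiceType) (R : W -> W -> Prop) (F : set_system nat).
Hypothesis F_ultra : UltraFilter F.
Hypothesis F_free : forall k, F [set m | m <> k].
Hypothesis R_trans : forall a b c, R a b -> R b c -> R a c.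
Local Notation X := (frame_space R (FilterType F _)).

Lemma frame_space_openE (O : set X) : open O = frame_space_open R F O.
Proof. by []. Qed.

Let ultra_setC (A : set nat) : ~ F A -> F (~` A).
Proof. by case: (in_ultra_setVsetC A F_ultra). Qed.

Lemma upper_slice_large w (A : set X) u :
  (forall v, R w v -> ~ F (slice A v)) -> R w u ->
  F (slice [set z : X | R w z.1 /\ ~ A z] u).
Proof.
move=> Athin Rwu; apply: filterS (ultra_setC (Athin u Rwu)) => m nAum.
by split.
Qed.

Lemma upper_open w (A : set X) : (forall v, R w v -> ~ F (slice A v)) ->
  open [set z : X | R w z.1 /\ ~ A z].
Proof.
rewrite frame_space_openE => Athin z [Rwz _] u Rzu.
by apply: upper_slice_large => //; exact: R_trans Rwz Rzu.
Qed.

Lemma setU1_open (x : X) (U : set X) : open U ->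
  (forall u, R x.1 u -> F (slice U u)) -> open (x |` U).
Proof.
rewrite !frame_space_openE => oU Ularge z Uz u Rzu.
apply: filterS (_ : F (slice U u)) => [m|]; first by right.
by case: Uz Rzu => [->|Uz] Rzu; [exact: Ularge | exact: oU Uz u Rzu].
Qed.

Lemma point_upper_open (x : X) (A : set X) :
  (forall v, R x.1 v -> ~ F (slice A v)) ->
  open (x |` [set z : X | R x.1 z.1 /\ ~ A z]).
Proof.
move=> Athin; apply: setU1_open; first exact: upper_open.
by move=> u; apply: upper_slice_large.
Qed.

Lemma dense_in_subspace_thin (Y D : set X) (x : X) :
  D `<=` Y -> dense_in_subspace Y D -> Y x ->
  (forall u, R x.1 u -> ~ F (slice Y u)) -> D x.
Proof.
move=> DY Ddense Yx Ythin.
have [|z [[->|[_ nYz]] Dz]] := Ddense _ (point_upper_open Ythin) => //.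
  by exists x; split => //; left.
by have := DY z Dz.
Qed.

Lemma dense_in_subspace_large (Y D : set X) w u :
  dense_in_subspace Y D -> R w u -> F (slice Y u) ->
  exists2 v, R w v & F (slice D v).
Proof.
move=> Ddense Rwu FYu; apply: contrapT => Dthin.
have {}Dthin v : R w v -> ~ F (slice D v) by move=> Rwv FDv; apply: Dthin; exists v.
have [m [Yum nDum]] := filter_ex (filterI FYu (ultra_setC (Dthin u Rwu))).
have [|z [[_ nDz] Dz]] := Ddense _ (upper_open Dthin); last exact: nDz.
by exists (u, m).
Qed.

Lemma frame_space_hereditarily_irresolvable k : (1 < k)%N ->
  (forall P : set W, P !=set0 -> exists2 w, P w & forall v, P v -> R w v -> R v w) ->
  (forall w (g : 'I_k -> W), (forall i, R w (g i) /\ R (g i) w) -> ~ injective g) ->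
  hereditarily_irresolvable X k.
Proof.
move=> k_gt1 has_maximal small_clusters Y [[y l0] Yy] [D [DY _ Ddense Ddisj]].
have D_disj i j x : i != j -> D i x -> D j x -> False.
  by move=> /Ddisj Dij Dix Djx; have : (D i `&` D j) x by []; rewrite Dij.
have [w [l Ywl] w_max] :=
  has_maximal [set w | exists l, Y (w, l)] (ex_intro _ y (ex_intro _ l0 Yy)).
have [u Rwu FYu] : exists2 u, R w u & F (slice Y u).
  apply: contrapT => Ythin.
  have Dwl i : D i (w, l).
    apply: dense_in_subspace_thin (DY i) (Ddense i) Ywl _ => u Rwu FYu.
    by apply: Ythin; exists u.
  exact: (D_disj (Ordinal (ltnW k_gt1)) (Ordinal k_gt1) (w, l)).
have /choice[g gP] i : exists v, R w v /\ F (slice (D i) v).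
  by have [v] := dense_in_subspace_large (Ddense i) Rwu FYu; exists v.
apply: (small_clusters w g) => [i|i j gij].
  have [Rwg FDg] := gP i; split => //; apply: w_max Rwg.
  by have [m Dm] := filter_ex FDg; exists m; exact: DY Dm.
apply/eqP; apply: contraT => ij; exfalso.
have [m [Dim Djm]] := filter_ex (filterI (gP i).2 (gP j).2).
by apply: (D_disj i j (g i, m) ij Dim); rewrite gij.
Qed.

Lemma frame_space_accessible : accessible_space X.
Proof.
move=> x y xy; exists [set z | z <> y]; split; rewrite ?inE //=; last exact/eqP.
rewrite frame_space_openE => z _ u _; apply: filterS (F_free y.2) => m my uy.
by apply: my; rewrite -uy.
Qed.

Lemma frame_space_fst_continuous U :
  upset R U -> open ((fun x : X => x.1) @^-1` U).
Proof.
rewrite frame_space_openE => Uup x Ux u Rxu; apply: filterS (@filterT _ F _) => m _.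
exact: Uup Ux Rxu.
Qed.

Lemma frame_space_fst_open (O : set X) : open O -> upset R ((fun x : X => x.1) @` O).
Proof.
rewrite frame_space_openE => oO w u [x Ox <-] Rxu.
by have [m Oum] := filter_ex (oO x Ox u Rxu); exists (u, m).
Qed.

Lemma frame_space_fiber_crowded w :
  R w w -> crowded_in ((fun x : X => x.1) @^-1` [set w]).
Proof.
move=> Rww [w' k] /= -> A; rewrite nbhsE => -[B [oB Bx] BA].
have [m [Bwm mk]] := filter_ex (filterI (oB _ Bx w Rww) (F_free k)).
exists (w, m); split => //; last exact: BA.
by apply/eqP => -[].
Qed.

Lemma frame_space_fiber_discrete w : ~ R w w ->
  (fun x : X => x.1) @^-1` [set w] `&` dset ((fun x : X => x.1) @^-1` [set w]) = set0.
Proof.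
move=> nRww; apply/seteqP; split => // x [/= xw xlim].
have slice0_small v : R x.1 v -> ~ F (slice set0 v) by move=> _ /filter_ex[].
have x_nbhs :=
  open_nbhs_nbhs (conj (point_upper_open slice0_small) (or_introl erefl)).
have [y [yx yw [xy|[Rxy _]]]] := xlim _ x_nbhs; first by rewrite xy eqxx in yx.
by apply: nRww; rewrite -{1}xw -yw.
Qed.

Lemma frame_space_fst_d_morphism : d_morphism R (fun x : X => x.1).
Proof.
split; [exact: frame_space_fst_continuous | exact: frame_space_fst_open |
        exact: frame_space_fiber_crowded | exact: frame_space_fiber_discrete].
Qed.

End FrameSpace.

Lemma K4Cn_4 n a : K4Cn n (Imp (Dia (Dia a)) (Dia a)).
Proof. by apply: nt_ax; left; exists a. Qed.

Lemma K4Cn_Cn n phi : K4Cn n (Cn n phi).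
Proof. by apply: nt_ax; right; exists phi. Qed.

Lemma exists_free_ultrafilter :
  exists F : set_system nat, UltraFilter F /\ forall k, F [set m | m <> k].
Proof.
have [F [F_ultra evF]] := ultraFilterLemma eventually_filter.
exists F; split => // k; apply: evF; exists k.+1 => // m /= km mk.
by rewrite mk ltnn in km.
Qed.

Theorem theorem5 (n : nat) (W : finType) (R : rel W) :
  (1 <= n)%N ->
  (forall a, K4Cn n a -> frame_valid (fun w u => R w u) a) ->
  exists (X : topologicalType) (f : X -> W),
    [/\ hereditarily_irresolvable X n.+1,
        TD_space X,
        d_morphism (fun w u => R w u) f
      & forall w : W, exists x : X, f x = w].
Proof.
move=> n_gt0 K4Cn_valid.
have R_trans := frame_valid_4_trans (K4Cn_valid _ (K4Cn_4 n (Var 0))).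
have [F [F_ultra F_free]] := exists_free_ultrafilter.
exists (frame_space (fun w u => R w u) (FilterType F _)), (fun x => x.1); split.
- apply: frame_space_hereditarily_irresolvable => //; first exact: exists_maximal.
  move=> w g g_cluster.
  apply: frame_valid_Cn_clique_not_inj (K4Cn_valid _ (K4Cn_Cn n Var)) _.
  by move=> i j; apply: R_trans (g_cluster i).2 (g_cluster j).1.
- by move=> x; apply: limit_point_closed; exact: frame_space_accessible.
- exact: frame_space_fst_d_morphism.
- by move=> w; exists (w, 0%N).
Qed.
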